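(* For even $n$ and an alphabet $\Sigma$ with $|\Sigma|\ge n$, $\mathsf{maxPI}(\mathrm{Col})=\Theta(\sqrt{n})$.
   Context: The collision problem $\mathrm{Col}$ is the partial function on $S\subseteq\Sigma^n$ where $S$ consists of the positive inputs, $x=x_1\cdots x_n$ with all $x_i$ distinct ($\mathrm{Col}(x)=1$), and the negative inputs, $x$ such that for each $i$ there is exactly one $j\neq i$ with $x_i=x_j$ ($\mathrm{Col}(x)=0$). For $f:S\to\{0,1\}$, $S\subseteq\Sigma^n$, with $p=\{p_x:x\in S\}$ ranging over families of probability distributions on $[n]$, $$\mathsf{maxPI}(f)=\min_{p}\ \max_{x,y\in S:\ f(x)\neq f(y)} \frac{1}{\max_{i:\,x_i\neq y_i}\sqrt{p_x(i)p_y(i)}}.$$ *)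

From HB Require Import structures.
From mathcomp Require Import all_boot all_order all_algebra.
From mathcomp Require Import boolp classical_sets reals constructive_ereal ereal.
Set Implicit Arguments. Unset Strict Implicit. Unset Printing Implicit Defensive.
Import Order.TTheory GRing.Theory Num.Theory.
Local Open Scope ring_scope.
Local Open Scope classical_set_scope.

Definition input (n : nat) (Sigma : finType) := {ffun 'I_n -> Sigma}.

Definition is_distr (R : realType) (n : nat) (q : 'I_n -> R) : Prop :=
  (forall i, 0 <= q i) /\ \sum_(i < n) q i = 1.

(* 1 / max_{i : x_i <> y_i} sqrt(px(i) py(i)), in \bar R (= +oo when the max is 0). *)
Definition inv_overlap (R : realType) (n : nat) (Sigma : finType)
    (x y : input n Sigma) (px py : 'I_n -> R) : \bar R :=
  let m := \big[Num.max/0]_(i < n | x i != y i) Num.sqrt (px i * py i) in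
  if m == 0 then +oo%E else (m^-1)%:E.

Definition maxPI_obj (R : realType) (n : nat) (Sigma : finType)
    (S : input n Sigma -> bool) (f : input n Sigma -> bool)
    (p : input n Sigma -> 'I_n -> R) : \bar R :=
  ereal_sup [set v | exists x y, [/\ S x, S y, f x != f y &
                                    v = inv_overlap x y (p x) (p y)]].

Definition maxPI (R : realType) (n : nat) (Sigma : finType)
    (S : input n Sigma -> bool) (f : input n Sigma -> bool) : \bar R :=
  ereal_inf [set maxPI_obj S f p | p in
               [set p : input n Sigma -> 'I_n -> R |
                 forall x, S x -> is_distr (p x)]].

Definition col_pos (n : nat) (Sigma : finType) (x : input n Sigma) : bool :=
  [forall i : 'I_n, forall j : 'I_n, (x i == x j) ==> (i == j)].

Definition col_neg (n : nat) (Sigma : finType) (x : input n Sigma) : bool :=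
  [forall i : 'I_n, #|[set j : 'I_n | (j != i) && (x i == x j)]| == 1%N].

Definition col_dom (n : nat) (Sigma : finType) (x : input n Sigma) : bool :=
  col_pos x || col_neg x.

Definition Col (n : nat) (Sigma : finType) (x : input n Sigma) : bool := col_pos x.

From Pilot Require Import Defs.
From HB Require Import structures.
From mathcomp Require Import all_boot all_order all_algebra perm.
From mathcomp Require Import boolp classical_sets reals constructive_ereal ereal.
From mathcomp Require Import zify ring lra.

(* Upper bound: give every positive input the uniform distribution and every
   negative input y the uniform distribution on one colliding pair {i0, j}
   (y i0 = y j).  A positive input x is injective, so it differs from y at i0
   or at j, where the product of the two weights is at least 1/(2n); hence
   maxPI <= sqrt (2n).
   Lower bound, for n = 2k: whatever the family p, fix an injective x.  By
   Markov's inequality at least k indices are light (p_x(i) <= 1/k), and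
   there is a negative y that differs from x only at light indices, so every
   differing index has overlap sqrt (p_x(i) p_y(i)) <= sqrt (1/k); hence
   maxPI >= sqrt k = sqrt (n/2). *)

Set Implicit Arguments.
Unset Strict Implicit.
Unset Printing Implicit Defensive.
Import Order.TTheory GRing.Theory Num.Theory.
Local Open Scope ring_scope.

Section InvOverlap.
Variables (R : realType) (n : nat) (Sigma : finType).
Implicit Types (x y : input n Sigma) (px py : 'I_n -> R).

Lemma inv_overlapC x y px py : inv_overlap x y px py = inv_overlap y x py px.
Proof.
rewrite /inv_overlap (eq_bigl (fun i => y i != x i)) => [|i]; last by rewrite eq_sym.
by rewrite (eq_bigr (fun i => Num.sqrt (py i * px i))) // => i _; rewrite mulrC.
Qed.

Lemma le_inv_overlap x y px py (B : R) : 0 < B ->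
  (forall i, x i != y i -> Num.sqrt (px i * py i) <= B) ->
  ((B^-1)%:E <= inv_overlap x y px py)%E.
Proof.
move=> B_gt0 le_B; rewrite /inv_overlap.
set m := \big[_/_]_(i | _) _.
have [_|m_neq0] := eqVneq m 0; first exact: leey.
have m_le_B : m <= B by apply: bigmax_le => //; exact: ltW.
have m_ge0 : 0 <= m by rewrite /m; elim/big_ind: _ => //= a b ha hb; rewrite le_max ha.
have m_gt0 : 0 < m by rewrite lt_def m_neq0.
by rewrite lee_fin lef_pV2 ?posrE.
Qed.

Lemma inv_overlap_le x y px py (B : R) d : 0 < B -> x d != y d ->
  B <= Num.sqrt (px d * py d) -> (inv_overlap x y px py <= (B^-1)%:E)%E.
Proof.
move=> B_gt0 xy_d B_le; rewrite /inv_overlap.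
set m := \big[_/_]_(i | _) _.
have B_le_m : B <= m.
  exact: le_trans B_le (le_bigmax_cond _ (fun i => Num.sqrt (px i * py i)) xy_d).
have m_gt0 : 0 < m by exact: lt_le_trans B_le_m.
by rewrite (negbTE (lt0r_neq0 m_gt0)) lee_fin lef_pV2 ?posrE.
Qed.

End InvOverlap.

Section Distributions.
Variables (R : realType) (n : nat).

Lemma card_distr_gt (q : 'I_n -> R) (t : R) : is_distr q -> 0 < t ->
  #|[pred i | t < q i]|%:R * t <= 1.
Proof.
move=> [q_ge0 q_sum] t_gt0; rewrite -[leRHS]q_sum (bigID [pred i | t < q i]) /=.
rewrite -[X in X <= _]addr0; apply: lerD; last exact: sumr_ge0.
rewrite mulr_natl -sumr_const; by apply: ler_sum => i; rewrite inE => /ltW.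
Qed.

Lemma distr_le1 (q : 'I_n -> R) i : is_distr q -> q i <= 1.
Proof. by move=> [q_ge0 <-]; rewrite (bigD1 i) //= lerDl sumr_ge0. Qed.

Definition uniform_distr : 'I_n -> R := fun=> n%:R^-1.

Lemma uniform_distrP : (0 < n)%N -> is_distr uniform_distr.
Proof.
move=> n_gt0; split=> [i|]; first by rewrite invr_ge0.
by rewrite sumr_const card_ord -[LHS]mulr_natl mulfV // pnatr_eq0 -lt0n.
Qed.

Definition pair_distr (i j : 'I_n) : 'I_n -> R :=
  fun l => ((l == i)%:R + (l == j)%:R) / 2.

Lemma pair_distrP i j : is_distr (pair_distr i j).
Proof.
have sum_ind (a : 'I_n) : \sum_(l < n) (l == a)%:R = 1 :> R.
  by rewrite (bigD1 a) //= eqxx big1 ?addr0 // => l /negbTE ->.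
split=> [l|]; first by rewrite divr_ge0 ?addr_ge0.
rewrite -mulr_suml big_split /= !sum_ind; lra.
Qed.

Lemma pair_distr_ge i j l : (l == i) || (l == j) -> 1 / 2 <= pair_distr i j l.
Proof.
move=> l_ij.
rewrite /pair_distr; have := ler0n R (l == i); have := ler0n R (l == j).
by case/orP: l_ij => /eqP ->; rewrite eqxx /=; lra.
Qed.

End Distributions.

Section CollisionInputs.
Variables (n : nat) (Sigma : finType).
Implicit Types (x y : input n Sigma).

(* The comprehension in [col_neg] is a classical set: classical_set_scope is
   open in Defs. *)
Lemma card_classical_set (T : finType) (b : pred T) :
  #|[set j | b j]%classic| = #|[set j | b j]%SET|.
Proof. by apply: eq_card => j; rewrite inE; apply/idP/idP => [/set_mem|/mem_set]. Qed.

Lemma col_posP x : reflect (injective x) (col_pos x).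
Proof.
apply: (iffP forallP) => [x_pos i j xij | x_inj i].
  by have /forallP/(_ j)/implyP := x_pos i; rewrite xij eqxx => /(_ isT)/eqP.
by apply/forallP => j; apply/implyP => /eqP/x_inj ->.
Qed.

Lemma exists_col_pos : (n <= #|Sigma|)%N -> exists x, col_pos x.
Proof.
move=> n_le; exists [ffun i => enum_val (widen_ord n_le i)]; apply/col_posP.
by move=> i j; rewrite !ffunE => /enum_val_inj/(congr1 val) /= /val_inj.
Qed.

Definition col_partner (i : 'I_n) y : 'I_n :=
  odflt i [pick j | (j != i) && (y i == y j)].

Lemma col_partnerP i y : col_neg y -> col_partner i y != i /\ y i = y (col_partner i y).
Proof.
rewrite /col_partner; case: pickP => [j /andP[-> /eqP //] | none].
move/forallP/(_ i)/eqP; rewrite card_classical_set eq_card0 // => j.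
by rewrite inE none.
Qed.

Lemma col_pos_neg x (i0 : 'I_n) : col_pos x -> ~~ col_neg x.
Proof.
move=> /col_posP x_inj; apply/negP => /(col_partnerP i0)[ne_i0 /x_inj eq_i0].
by rewrite -eq_i0 eqxx in ne_i0.
Qed.

Lemma col_pos_differs_pair x y i j : col_pos x -> j != i -> y i = y j ->
  (x i != y i) || (x j != y j).
Proof.
move=> /col_posP x_inj ne_ji y_ij; rewrite -negb_and.
apply/negP => /andP[/eqP xi /eqP xj].
by move: ne_ji; rewrite (x_inj j i) ?eqxx // xi xj.
Qed.

Lemma col_neg_comp_inj (T : finType) (z : T -> Sigma) (h : input n T) :
  injective z -> col_neg h -> col_neg [ffun i => z (h i)].
Proof.
move=> z_inj /forallP h_neg; apply/forallP => i; rewrite card_classical_set.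
rewrite -(eqP (h_neg i)) card_classical_set; apply/eqP/eq_card => j.
by rewrite !inE !ffunE (inj_eq z_inj).
Qed.

Lemma col_neg_comp y (s : 'I_n -> 'I_n) :
  injective s -> col_neg y -> col_neg [ffun i => y (s i)].
Proof.
move=> s_inj /forallP y_neg; apply/forallP => i; rewrite card_classical_set.
rewrite -(eqP (y_neg (s i))) card_classical_set -[X in _ == X](card_preimset _ s_inj).
by apply/eqP/eq_card => j; rewrite !inE !ffunE (inj_eq s_inj).
Qed.

Lemma exists_perm_prefix (A : {pred 'I_n}) :
  exists s : {perm 'I_n}, forall a : 'I_n, (a < #|A|)%N -> s a \in A.
Proof.
case: n A => [|m] A; first by exists 1%g => -[].
pose e := enum A ++ enum [predC A].
have e_uniq : uniq e.
  by rewrite cat_uniq !enum_uniq andbT /=; apply/hasPn => i; rewrite !mem_enum inE.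
have e_size : size e = m.+1 by rewrite size_cat -!cardE cardC card_ord.
have f_inj : injective (fun a : 'I_m.+1 => nth ord0 e a).
  by move=> a b /eqP; rewrite nth_uniq ?e_size // => /eqP/val_inj.
exists (perm f_inj) => a a_lt; rewrite permE /e nth_cat -cardE a_lt.
by rewrite -mem_enum mem_nth // -cardE.
Qed.

End CollisionInputs.

Section FoldHalf.
Variable k : nat.

Definition fold_half : input (k + k) 'I_(k + k) :=
  [ffun i : 'I_(k + k) => insubd i (if (i < k)%N then i + k else i)%N].

Lemma val_fold_half (i : 'I_(k + k)) :
  val (fold_half i) = (if (i < k)%N then i + k else i)%N.
Proof. by rewrite ffunE insubdK //; have := ltn_ord i; case: ifP; lia. Qed.

Lemma fold_half_moved (i : 'I_(k + k)) : fold_half i != i -> (i < k)%N.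
Proof. by rewrite -val_eqE val_fold_half; case: ifP; rewrite ?eqxx. Qed.

Lemma col_neg_fold_half : col_neg fold_half.
Proof.
apply/forallP => i; rewrite card_classical_set; apply/cards1P.
exists (insubd i (if (i < k)%N then i + k else i - k)%N); apply/setP => j.
rewrite !inE -!val_eqE /= !val_fold_half insubdK; last first.
  by have := ltn_ord i; case: ifP; lia.
have := ltn_ord i; have := ltn_ord j.
case: (ltnP i k) => ik; case: (ltnP j k) => jk i_lt j_lt;
  apply/idP/idP => [/andP[/eqP ? /eqP ?]|/eqP ?]; apply/eqP || apply/andP; lia.
Qed.

Lemma exists_col_neg_near (Sigma : finType) (x : input (k + k) Sigma)
    (A : {pred 'I_(k + k)}) : col_pos x -> (k <= #|A|)%N ->
  exists y : input (k + k) Sigma, col_neg y /\ forall i, x i != y i -> i \in A.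
Proof.
move=> /col_posP x_inj k_le; have [s sA] := exists_perm_prefix A.
(* Conjugating fold_half by s moves only the indices s a with a < k, which lie in A. *)
pose y := [ffun i => x (s (fold_half ((s^-1)%g i)))].
exists y; split.
  have xs_inj : injective (x \o s) by exact: inj_comp x_inj (@perm_inj _ s).
  have := col_neg_comp (@perm_inj _ (s^-1)%g) (col_neg_comp_inj xs_inj col_neg_fold_half).
  by congr col_neg; apply/ffunP => i; rewrite !ffunE.
move=> i; rewrite ffunE -{1}(permKV s i) (inj_eq x_inj) (inj_eq (@perm_inj _ s)).
rewrite eq_sym => /fold_half_moved lt_k.
by rewrite -(permKV s i) sA // (leq_trans lt_k).
Qed.

End FoldHalf.

Lemma maxPI_obj_Col_ge (R : realType) (k : nat) (Sigma : finType)
    (p : input (k + k) Sigma -> 'I_(k + k) -> R) :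
  (0 < k)%N -> (k + k <= #|Sigma|)%N -> (forall x, col_dom x -> is_distr (p x)) ->
  ((Num.sqrt k%:R)%:E <= maxPI_obj (@col_dom _ Sigma) (@Col _ Sigma) p)%E.
Proof.
move=> k_gt0 kk_le p_distr; have kV_gt0 : (0 : R) < k%:R^-1 by rewrite invr_gt0 ltr0n.
have i0 : 'I_(k + k) := Ordinal (ltn_addr k k_gt0).
have [x x_pos] := exists_col_pos kk_le.
have x_distr : is_distr (p x) by apply: p_distr; rewrite /col_dom x_pos.
pose light := [pred i | p x i <= k%:R^-1].
have light_ge : (k <= #|light|)%N.
  have := card_distr_gt x_distr kV_gt0.
  rewrite ler_pdivrMr ?ltr0n // mul1r ler_nat (eq_card (B := [predC light])) => [|i].
    move=> heavy_le; rewrite -(leq_add2r #|[predC light]|) cardC card_ord.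
    by rewrite leq_add2l.
  by rewrite !inE ltNge.
have [y [y_neg xy_light]] := exists_col_neg_near x_pos light_ge.
have y_distr : is_distr (p y) by apply: p_distr; rewrite /col_dom y_neg orbT.
have y_npos : col_pos y = false := negbTE (contraL (col_pos_neg i0) y_neg).
apply: le_trans (ereal_sup_ubound _); last first.
  exists x, y; split; rewrite /col_dom /Col ?x_pos ?y_neg ?y_npos ?orbT //.
rewrite -[Num.sqrt _]invrK -sqrtrV ?ler0n //.
apply: le_inv_overlap => [|i /xy_light light_i]; first by rewrite sqrtr_gt0.
apply: ler_wsqrtr; rewrite -[leRHS]mulr1.
exact: ler_pM (proj1 x_distr i) (proj1 y_distr i) light_i (distr_le1 i y_distr).
Qed.

Lemma maxPI_Col_ge (R : realType) (k : nat) (Sigma : finType) :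
  (0 < k)%N -> (k + k <= #|Sigma|)%N ->
  ((Num.sqrt k%:R)%:E <= @maxPI R (k + k) Sigma (@col_dom _ Sigma) (@Col _ Sigma))%E.
Proof.
move=> k_gt0 kk_le; apply: le_ereal_inf_tmp => _ [p p_distr <-].
exact: maxPI_obj_Col_ge.
Qed.

Lemma inv_overlap_pos_pair_le (R : realType) (n : nat) (Sigma : finType)
    (x y : input n Sigma) (i j : 'I_n) : col_pos x -> j != i -> y i = y j ->
  (inv_overlap x y (@uniform_distr R n) (pair_distr R i j) <=
     (Num.sqrt (2 * n%:R))%:E)%E.
Proof.
move=> x_pos ne_ji y_ij.
have nR : (0 : R) < n%:R by rewrite ltr0n (leq_ltn_trans _ (ltn_ord i)).
have [d xy_d d_ij] : exists2 d, x d != y d & (d == i) || (d == j).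
  have := col_pos_differs_pair x_pos ne_ji y_ij.
  by case/orP; [exists i | exists j]; rewrite ?eqxx ?orbT.
rewrite -[Num.sqrt _]invrK -sqrtrV ?mulr_ge0 ?ler0n //.
apply: (inv_overlap_le _ xy_d); first by rewrite sqrtr_gt0 invr_gt0 mulr_gt0.
apply: ler_wsqrtr.
have -> : (2 * n%:R)^-1 = n%:R^-1 * (1 / 2) :> R by field; rewrite gt_eqF.
by apply: ler_wpM2l; [rewrite invr_ge0 | exact: pair_distr_ge].
Qed.

Lemma maxPI_Col_le (R : realType) (n : nat) (Sigma : finType) : (0 < n)%N ->
  (@maxPI R n Sigma (@col_dom n Sigma) (@Col n Sigma) <= (Num.sqrt (2 * n%:R))%:E)%E.
Proof.
move=> n_gt0; pose i0 := Ordinal n_gt0.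
pose p (y : input n Sigma) :=
  if col_neg y then pair_distr R i0 (col_partner i0 y) else @uniform_distr R n.
apply: le_trans (ereal_inf_lbound _) _.
  exists p => // x _; rewrite /p; case: ifP => _;
    [exact: pair_distrP | exact: uniform_distrP].
have pos_neg_le x y : col_pos x -> col_neg y ->
    (inv_overlap x y (p x) (p y) <= (Num.sqrt (2 * n%:R))%:E)%E.
  move=> x_pos y_neg; have [ne_i0 y_i0] := col_partnerP i0 y_neg.
  rewrite /p y_neg (negbTE (col_pos_neg i0 x_pos)).
  exact: inv_overlap_pos_pair_le.
apply: ge_ereal_sup => _ [x [y [+ + + ->]]]; rewrite /col_dom /Col.
case: (boolP (col_pos x)) => x_pos; case: (boolP (col_pos y)) => y_pos //= x_neg y_neg _.
  exact: pos_neg_le.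
by rewrite inv_overlapC; exact: pos_neg_le.
Qed.

Theorem mainTheorem19 (R : realType) :
  exists c1 c2 : R, 0 < c1 /\ 0 < c2 /\
    forall (n : nat) (Sigma : finType), ~~ odd n -> (0 < n)%N -> (n <= #|Sigma|)%N ->
      ((c1 * Num.sqrt (n%:R))%:E <= @maxPI R n Sigma (@col_dom n Sigma) (@Col n Sigma))%E /\
      (@maxPI R n Sigma (@col_dom n Sigma) (@Col n Sigma) <= (c2 * Num.sqrt (n%:R))%:E)%E.
Proof.
exists (Num.sqrt 2^-1), (Num.sqrt 2); rewrite !sqrtr_gt0 invr_gt0; do 2!split => //.
move=> n Sigma /even_halfK <-; rewrite -addnn; move: n./2 => k kk_gt0 kk_le.
rewrite -!sqrtrM ?invr_ge0 //; split; last exact: maxPI_Col_le.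
have -> : 2^-1 * (k + k)%:R = k%:R :> R by rewrite natrD; field.
by apply: maxPI_Col_ge kk_le; rewrite -double_gt0 -addnn.
Qed.
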